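(* Let $\gamma$ be a generator of the multiplicative group $\mathbb{F}_{q^m}^*$. Let $d\le q-1$ and let $\ell_1,\dots,\ell_d\in\{0,1,\dots,q-2\}$ be distinct. Then the $d\times d$ matrix $M$ over $\mathbb{F}_{q^m}$ whose $(i,j)$ entry, for $i=0,1,\dots,d-1$ and $j=1,\dots,d$, is $\gamma^{\ell_j(1+q+\cdots+q^{i-1})}$ (so the row $i=0$ is all ones, row $i=1$ is $(\gamma^{\ell_1},\dots,\gamma^{\ell_d})$, row $i=2$ is $(\gamma^{\ell_1(1+q)},\dots,\gamma^{\ell_d(1+q)})$, etc.) is full rank. *)

From mathcomp Require Import all_boot all_algebra all_field.
Set Implicit Arguments.
Unset Strict Implicit.
Unset Printing Implicit Defensive.

From mathcomp Require Import all_boot all_algebra all_field zify.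
Set Implicit Arguments.
Unset Strict Implicit.
Unset Printing Implicit Defensive.
Import GRing.Theory.
Local Open Scope ring_scope.

(* Write [i]_q = 1 + q + ... + q^(i-1), so that the matrix of the theorem is
   M = (w^(l_j [i]_q))_{i,j} with w = gamma.  We argue in an algebraic closure
   K of F_{q^m}, where the q-power map is additive, and pick y in K with
   y^(q-1) = w, so that y^(q^i) = y w^([i]_q).
   - Since [t]_q = t (mod q-1) and q-1 divides the order of w, w^([t]_q) <> 1
     for 0 < t < q-1; hence y, y^q, ..., y^(q^(q-2)) are pairwise distinct.
   - Consequently y^(l_1), ..., y^(l_d) are linearly independent over the
     field F_q of q-fixed points: a dependency gives a nonzero polynomial of
     degree < q-1 with q-1 roots y^(q^s).
   - If c were a nonzero left kernel vector of M, the linearized polynomial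
     P = sum_i c_i X^(q^i) of degree <= q^(d-1) would vanish on the q^d
     distinct elements sum_j a_j y^(l_j), a_j in F_q: a contradiction. *)

Definition qint (q i : nat) : nat := \sum_(t < i) q ^ t.

Lemma qintS (q i : nat) : qint q i.+1 = (qint q i + q ^ i)%N.
Proof. by rewrite /qint big_ord_recr. Qed.

Lemma qintD (q a b : nat) : qint q (a + b) = (qint q a + q ^ a * qint q b)%N.
Proof.
elim: b => [|b IH]; first by rewrite addn0 /qint big_ord0 muln0 addn0.
by rewrite addnS !qintS IH mulnDr -expnD addnA.
Qed.

Lemma expn_qint (q i : nat) : (0 < q)%N -> (q ^ i = (qint q i * q.-1).+1)%N.
Proof. by move=> q_gt0; rewrite mulnC -predn_exp prednK // expn_gt0 q_gt0. Qed.

(* Since q = 1 (mod q - 1), also [i]_q = i (mod q - 1). *)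
Lemma qint_mod (q i : nat) : (0 < q)%N -> qint q i = i %[mod q.-1].
Proof.
move=> q_gt0; have q_mod : q = 1 %[mod q.-1].
  by rewrite -{1}(prednK q_gt0) -addn1 modnDl.
elim: i => [|i IH]; first by rewrite /qint big_ord0.
by rewrite qintS -modnDm IH -modnXm q_mod modnXm exp1n modnDm addn1.
Qed.

Lemma prim_root_qint_neq1 (R : nzRingType) (q N t : nat) (w : R) :
  (q.-1 %| N)%N -> N.-primitive_root w -> (0 < t < q.-1)%N ->
  w ^+ qint q t != 1.
Proof.
move=> qN w_prim /andP[t_gt0 t_lt]; rewrite -(prim_order_dvd w_prim).
apply: contraTN isT => /(dvdn_trans qN).
have q_gt0 : (0 < q)%N by case: (q) t_lt.
by rewrite /dvdn qint_mod // modn_small // eqn0Ngt t_gt0.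
Qed.

Lemma prim_root_neq0 (R : nzRingType) (n : nat) (z : R) :
  n.-primitive_root z -> z != 0.
Proof.
move=> z_prim; apply/eqP => z0; move: (prim_expr_order z_prim).
by rewrite z0 expr0n eqn0Ngt (prim_order_gt0 z_prim) /= => /esym/eqP; rewrite oner_eq0.
Qed.

Lemma qfixed_elements (R : idomainType) (q : nat) (zeta : R) :
  q.-1.-primitive_root zeta ->
  {e : 'I_q -> R | injective e & forall t, e t ^+ q = e t}.
Proof.
case: q => [|n] /= zeta_prim; first by have := prim_order_gt0 zeta_prim.
pose e (t : 'I_n.+1) := if unlift ord0 t is Some s then zeta ^+ s else 0.
exists e => [a b|t].
- rewrite /e; case: (unliftP ord0 a) => [s ->|->]; case: (unliftP ord0 b) => [s' ->|->] //.
  + move/eqP; rewrite (eq_prim_root_expr zeta_prim) !modn_small //.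
    by move/eqP/val_inj ->.
  + by move/eqP; rewrite expf_eq0 (negbTE (prim_root_neq0 zeta_prim)) andbF.
  + by move/esym/eqP; rewrite expf_eq0 (negbTE (prim_root_neq0 zeta_prim)) andbF.
- rewrite /e; case: (unlift ord0 t) => [s|]; last by rewrite expr0n.
  by rewrite exprS exprAC (prim_expr_order zeta_prim) expr1n mulr1.
Qed.

Section QPowerFrobenius.

Variables (K : fieldType) (q : nat).
Hypothesis q_pchar : [pchar K].-nat q.

Lemma pchar_qpow (s : nat) : [pchar K].-nat (q ^ s)%N.
Proof. by rewrite pnatX q_pchar. Qed.

Lemma expq_sum (I : Type) (r : seq I) (P : pred I) (u : I -> K) (s : nat) :
  (\sum_(i <- r | P i) u i) ^+ (q ^ s)%N = \sum_(i <- r | P i) u i ^+ (q ^ s)%N.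
Proof.
have qs_gt0 : (0 < q ^ s)%N by case/andP: (pchar_qpow s).
apply: (big_morph (fun x => x ^+ (q ^ s)%N)) => [x y|].
  by rewrite exprDn_pchar ?pchar_qpow.
by rewrite expr0n eqn0Ngt qs_gt0.
Qed.

Lemma expqB (x y : K) (s : nat) :
  (x - y) ^+ (q ^ s)%N = x ^+ (q ^ s)%N - y ^+ (q ^ s)%N.
Proof. by rewrite exprDn_pchar ?exprNn_pchar ?pchar_qpow. Qed.

Lemma expq_eq1 (x : K) (s : nat) : (x ^+ (q ^ s)%N == 1) = (x == 1).
Proof.
have qs_gt0 : (0 < q ^ s)%N by case/andP: (pchar_qpow s).
by rewrite -subr_eq0 -{1}(expr1n K (q ^ s)%N) -expqB expf_eq0 qs_gt0 subr_eq0.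
Qed.

Lemma expq_comb (I : finType) (a u : I -> K) (s : nat) :
  (forall i, a i ^+ q = a i) ->
  (\sum_i a i * u i) ^+ (q ^ s)%N = \sum_i a i * u i ^+ (q ^ s)%N.
Proof.
move=> a_fixed; rewrite expq_sum; apply: eq_bigr => i _; rewrite exprMn.
suff -> : a i ^+ (q ^ s)%N = a i by [].
by elim: s => [|s IH]; rewrite ?expr1 // expnSr exprM IH a_fixed.
Qed.

End QPowerFrobenius.

Lemma coef_sum_monomials (R : nzRingType) (I : finType) (c : I -> R)
    (e : I -> nat) (i0 : I) :
  injective e -> (\sum_i c i *: 'X^(e i))`_(e i0) = c i0.
Proof.
move=> e_inj; rewrite coef_sum (bigD1 i0) //= coefZ coefXn eqxx mulr1.
rewrite big1 ?addr0 // => i i_neq0.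
by rewrite coefZ coefXn (inj_eq e_inj) eq_sym (negbTE i_neq0) mulr0.
Qed.

Lemma size_sum_monomials (R : nzRingType) (I : finType) (c : I -> R)
    (e : I -> nat) (n : nat) :
  (forall i, e i < n)%N -> (size (\sum_i c i *: 'X^(e i))%R <= n)%N.
Proof.
move=> e_lt; apply: (leq_trans (size_sum _ _ _)); apply/bigmax_leqP => i _.
by apply: (leq_trans (size_scale_leq _ _)); rewrite size_polyXn.
Qed.

(* If z, z^q, ..., z^(q^(n-1)) are pairwise distinct, then for distinct
   exponents l_j < n the powers z^(l_j) are linearly independent over the
   q-fixed elements: a dependency \sum_j (a_j - b_j) z^(l_j) = 0 yields a
   polynomial of size <= n vanishing at the n points z^(q^s). *)
Lemma qfixed_comb_inj (K : fieldType) (q n d : nat) (z : K)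
    (l : 'I_d -> nat) (a b : 'I_d -> K) :
  [pchar K].-nat q -> uniq [seq z ^+ (q ^ s)%N | s <- iota 0 n] ->
  injective l -> (forall j, l j < n)%N ->
  (forall j, a j ^+ q = a j) -> (forall j, b j ^+ q = b j) ->
  \sum_j a j * z ^+ l j = \sum_j b j * z ^+ l j -> a =1 b.
Proof.
move=> q_pchar z_uniq l_inj l_lt a_fixed b_fixed eq_ab.
pose g : {poly K} := \sum_j (a j - b j) *: 'X^(l j).
have g_roots : all (root g) [seq z ^+ (q ^ s)%N | s <- iota 0 n].
  apply/allP => _ /mapP[s _ ->]; rewrite /root horner_sum.
  under eq_bigr do rewrite hornerZ hornerXn mulrBl exprAC.
  by rewrite sumrB -!expq_comb // eq_ab subrr.
have g0 : g = 0.
  apply/eqP/negPn/negP => g_neq0.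
  have := max_poly_roots g_neq0 g_roots z_uniq.
  by rewrite size_map size_iota ltnNge size_sum_monomials.
move=> j; apply/eqP; rewrite -subr_eq0.
by rewrite -(coef_sum_monomials (fun j => a j - b j) j l_inj) -/g g0 coef0.
Qed.

Section QPowerRoot.

Variables (K : fieldType) (q N : nat) (w y : K).
Hypotheses (q_pchar : [pchar K].-nat q) (q_gt1 : (1 < q)%N).
Hypotheses (qN : (q.-1 %| N)%N) (w_prim : N.-primitive_root w).
Hypothesis y_root : y ^+ q.-1 = w.

Lemma expy_qpow (i : nat) : y ^+ (q ^ i)%N = y * w ^+ qint q i.
Proof. by rewrite expn_qint ?(ltnW q_gt1) // exprS mulnC exprM y_root. Qed.

Lemma root_neq0 : y != 0.
Proof.
have qm1_gt0 : (0 < q.-1)%N by rewrite -subn1 subn_gt0.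
apply: contraTneq (prim_root_neq0 w_prim) => y0.
by rewrite -y_root y0 expf_eq0 qm1_gt0 eqxx.
Qed.

(* y^(q^s) = y w^([s]_q) and w^([t]_q) <> 1 for 0 < t < q-1 make the
   iterated q-powers of y distinct. *)
Lemma qpow_uniq : uniq [seq y ^+ (q ^ s)%N | s <- iota 0 q.-1].
Proof.
rewrite map_inj_in_uniq ?iota_uniq // => s s'.
wlog ss' : s s' / (s <= s')%N.
  move=> wlog_le s_in s'_in eq_pow.
  by case: (leqP s s') => [le|/ltnW le]; [|apply/esym]; apply: wlog_le.
rewrite !mem_iota !add0n => _ /andP[_ s'_lt].
rewrite !expy_qpow => /(mulfI root_neq0).
rewrite -(subnKC ss') qintD exprD -{1}(mulr1 (w ^+ qint q s)).
move=> /(mulfI (expf_neq0 _ (prim_root_neq0 w_prim))) /esym /eqP.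
rewrite mulnC exprM expq_eq1 //.
have [->|t_gt0] := posnP (s' - s); first by rewrite addn0.
rewrite (negbTE (prim_root_qint_neq1 qN w_prim _)) // t_gt0 /=.
exact: leq_ltn_trans (leq_subr _ _) s'_lt.
Qed.

Lemma horner_linearized (d : nat) (l : 'I_d -> nat) (c a : 'I_d -> K) :
  (forall j, a j ^+ q = a j) ->
  (\sum_i c i *: 'X^(q ^ i)%N).[\sum_j a j * y ^+ l j] =
  \sum_j a j * y ^+ l j * \sum_i c i * w ^+ (l j * qint q i).
Proof.
move=> a_fixed; rewrite horner_sum.
under eq_bigr do rewrite hornerZ hornerXn expq_comb // mulr_sumr.
rewrite exchange_big /=; apply: eq_bigr => j _; rewrite mulr_sumr.
apply: eq_bigr => i _; rewrite exprAC expy_qpow exprMn -exprM mulnC.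
by rewrite mulrCA -mulrA; congr (_ * _); apply: mulrCA.
Qed.

End QPowerRoot.

Lemma left_kernel_vector (R : fieldType) (n : nat) (A : 'M[R]_n) :
  (\rank A < n)%N -> exists2 c : 'rV_n, c *m A = 0 & exists i, c 0 i != 0.
Proof.
move=> rank_lt; have : kermx A != 0.
  by rewrite -mxrank_eq0 mxrank_ker -lt0n subn_gt0.
case/rowV0Pn => c /sub_kermxP cA0 c_neq0; exists c => //.
apply/existsP; apply: contraNT c_neq0 => /existsPn c0.
by apply/eqP/rowP => i; rewrite mxE; apply/eqP/negPn.
Qed.

Lemma closed_field_root (K : closedFieldType) (n : nat) (x : K) :
  (0 < n)%N -> exists y : K, y ^+ n = x.
Proof.
move=> n_gt0; have /closed_rootP[y] : size ('X^n - x%:P : {poly K}) != 1%N.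
  by rewrite size_XnsubC // eqSS -lt0n.
by rewrite /root !hornerE subr_eq0 => /eqP; exists y.
Qed.

Theorem rank_qint_power_matrix (K : closedFieldType) (q N d : nat) (w : K)
    (l : 'I_d -> nat) :
  [pchar K].-nat q -> (1 < q)%N -> (q.-1 %| N)%N -> N.-primitive_root w ->
  injective l -> (forall j, l j < q.-1)%N ->
  \rank (\matrix_(i < d, j < d) w ^+ (l j * qint q i)) = d.
Proof.
move=> q_pchar q_gt1 qN w_prim l_inj l_lt; set A := \matrix_(i, j) _.
apply/eqP; rewrite eqn_leq rank_leq_row leqNgt; apply/negP => rank_lt.
have [c cA0 [i0 ci0]] := left_kernel_vector rank_lt.
have [y y_root] : exists y : K, y ^+ q.-1 = w.
  by apply: closed_field_root; rewrite -subn1 subn_gt0.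
have [e e_inj e_fixed] := qfixed_elements (dvdn_prim_root w_prim qN).
pose P : {poly K} := \sum_i c 0 i *: 'X^(q ^ i)%N.
pose f (a : {ffun 'I_d -> 'I_q}) := \sum_j e (a j) * y ^+ l j.
have qpow_inj : injective (fun i : 'I_d => (q ^ i)%N).
  by move=> i i' /(expnI q_gt1) /val_inj.
have P_neq0 : P != 0.
  apply: contraNneq ci0 => P0.
  by rewrite -(coef_sum_monomials (c 0) i0 qpow_inj) -/P P0 coef0.
have P_roots : all (root P) [seq f a | a <- enum {ffun 'I_d -> 'I_q}].
  apply/allP => _ /mapP[a _ ->].
  rewrite /root (horner_linearized q_pchar q_gt1 y_root) //.
  apply/eqP/big1 => j _.
  suff -> : \sum_i c 0 i * w ^+ (l j * qint q i) = (c *m A) 0 j.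
    by rewrite cA0 mxE mulr0.
  by rewrite mxE; apply: eq_bigr => i _; rewrite mxE.
have f_uniq : uniq [seq f a | a <- enum {ffun 'I_d -> 'I_q}].
  rewrite map_inj_uniq ?enum_uniq // => a b eq_f; apply/ffunP => j.
  have y_uniq := qpow_uniq q_pchar q_gt1 qN w_prim y_root.
  apply: e_inj; move: j.
  by apply: (qfixed_comb_inj q_pchar y_uniq l_inj l_lt _ _ eq_f) => j.
have d_gt0 : (0 < d)%N by apply: leq_ltn_trans rank_lt.
have := max_poly_roots P_neq0 P_roots f_uniq.
rewrite size_map -cardE card_ffun !card_ord; apply/negP; rewrite -leqNgt.
apply: (@leq_trans (q ^ d.-1).+1); last by rewrite ltn_exp2l // prednK.
apply: size_sum_monomials => i; rewrite ltnS leq_pexp2l ?(ltnW q_gt1) //.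
by rewrite -ltnS prednK.
Qed.

(* The corollary: F = F_{q^m} embeds into an algebraic closure K, in which
   q = p^k is a power of the characteristic, q - 1 divides q^m - 1 and the
   image of gamma is still a primitive (q^m - 1)-th root of unity. *)
Theorem corollary2p16 (F : finFieldType) (p k q m : nat)
  (hp : prime p) (hk : (0 < k)%N) (hq : q = (p ^ k)%N) (hF : #|F| = (q ^ m)%N)
  (gamma : F) (hgamma : ((q ^ m).-1).-primitive_root gamma)
  (d : nat) (hd : (d <= q.-1)%N)
  (l : 'I_d -> nat) (hl_inj : injective l) (hl_range : forall j, (l j <= q - 2)%N) :
  \rank (\matrix_(i < d, j < d) gamma ^+ (l j * \sum_(t < i) q ^ t)%N) = d.
Proof.
have q_gt1 : (1 < q)%N by rewrite hq -(expn0 p) ltn_exp2l // prime_gt1.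
have pF : p \in [pchar F].
  by apply: (@card_finPcharP _ _ (k * m)); rewrite // hF hq expnM.
have [K [phi _]] := countable_algebraic_closure F.
have q_pchar : [pchar K].-nat q.
  by rewrite hq pnatX (eq_pnat _ (pcharf_eq (rmorph_pchar phi pF))) pnat_id.
have qN : (q.-1 %| (q ^ m).-1)%N by rewrite predn_exp dvdn_mulr.
rewrite -(mxrank_map phi) (_ : map_mx phi _ =
  \matrix_(i < d, j < d) phi gamma ^+ (l j * qint q i)); last first.
  by apply/matrixP => i j; rewrite !mxE rmorphXn.
apply: (rank_qint_power_matrix q_pchar q_gt1 qN) hl_inj _.
- by rewrite fmorph_primitive_root.
- by move=> j; have := hl_range j; lia.
Qed.
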